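(* Let $\kappa$ be a regular uncountable cardinal with $\kappa^{<\kappa}=\kappa$ and $\gamma^\omega<\kappa$ for all $\gamma<\kappa$. There is a $\kappa$-representation $\langle I^0_\alpha\mid\alpha<\kappa\rangle$ of $I^0$ such that for every limit ordinal $\delta<\kappa$ and every $\nu\in I^0$ there is $\beta<\delta$ satisfying: for every $\sigma\in I^0_\delta$ with $\sigma>\nu$ there is $\sigma'\in I^0_\beta$ with $\sigma\ge\sigma'\ge\nu$.
   Context: Let $\mathbb Q$ be the rationals and order $\kappa\times\mathbb Q$ lexicographically. $I^0$ is the set of functions $f:\omega\to\kappa\times\mathbb Q$, written $f(n)=(f_1(n),f_2(n))$, such that $\{n<\omega\mid f_1(n)\ne0\}$ is finite, ordered by $f<g$ iff $f(n)<g(n)$ for the least $n$ with $f(n)\ne g(n)$. A $\kappa$-representation of a set $A$ of size $\le\kappa$ is an increasing continuous sequence of subsets of $A$, each of size $<\kappa$, whose union is $A$. *)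

From mathcomp Require Import all_boot all_order all_algebra.
Set Implicit Arguments. Unset Strict Implicit. Unset Printing Implicit Defensive.
Import Order.TTheory GRing.Theory Num.Theory.

Definition le_card (A B : Type) : Prop := exists f : A -> B, injective f.
Definition lt_card (A B : Type) : Prop := le_card A B /\ ~ le_card B A.

Section Kappa.
Variables (K : Type) (ltK : K -> K -> Prop).

Definition strict_wellorder : Prop :=
  well_founded ltK /\
  (forall x, ~ ltK x x) /\
  (forall x y z, ltK x y -> ltK y z -> ltK x z) /\
  (forall x y, ltK x y \/ x = y \/ ltK y x).

(* initial segment {b | b < a}, i.e. the ordinal a < kappa *)
Definition seg (a : K) : Type := {b : K | ltK b a}.

(* (K, ltK) is an initial ordinal, i.e. a cardinal: every alpha < kappa
   has cardinality < kappa *)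
Definition is_cardinal : Prop := forall a, lt_card (seg a) K.

Definition uncountable : Prop := ~ le_card K nat.

Definition regular : Prop :=
  forall S : K -> Prop, lt_card {x : K | S x} K -> exists b, forall x, S x -> ltK x b.

(* kappa^{<kappa} = kappa : the set of all functions gamma -> kappa, gamma < kappa,
   has size <= kappa (>= is automatic) *)
Definition kappa_lt_kappa_eq : Prop := le_card {a : K & (seg a -> K)} K.

Definition pow_omega_below : Prop := forall a, lt_card (nat -> seg a) K.

Definition is_limit (d : K) : Prop :=
  (exists b, ltK b d) /\ (forall b, ltK b d -> exists c, ltK b c /\ ltK c d).

Definition leK (x y : K) : Prop := ltK x y \/ x = y.

Definition is_zero (x : K) : Prop := forall y, ~ ltK y x.

Definition ltKQ (p q : K * rat) : Prop :=
  ltK p.1 q.1 \/ (p.1 = q.1 /\ (p.2 < q.2)%R).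

Definition fin_supp (f : nat -> K * rat) : Prop :=
  exists N : nat, forall n, (N <= n)%N -> is_zero (f n).1.

Definition I0 : Type := {f : nat -> K * rat | fin_supp f}.

Definition I0lt (f g : I0) : Prop :=
  exists n, (forall m, (m < n)%N -> proj1_sig f m = proj1_sig g m) /\
            ltKQ (proj1_sig f n) (proj1_sig g n).

Definition I0le (f g : I0) : Prop := I0lt f g \/ f = g.

(* kappa-representation of I^0 : an increasing continuous sequence of subsets,
   each of size < kappa, whose union is I^0 *)
Definition kappa_representation (Rep : K -> I0 -> Prop) : Prop :=
  (forall a b, leK a b -> forall x, Rep a x -> Rep b x) /\
  (forall d, is_limit d -> forall x, Rep d x -> exists a, ltK a d /\ Rep a x) /\
  (forall a, lt_card {x : I0 | Rep a x} K) /\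
  (forall x, exists a, Rep a x).

End Kappa.

From mathcomp Require Import all_boot all_order all_algebra.
From mathcomp Require Import lra.
From Stdlib Require Import Classical ClassicalEpsilon FunctionalExtensionality ProofIrrelevance.

(* Take I^0_a = {f | every first coordinate of f is below a}.  As
   cf(kappa) > omega, countable subsets of kappa are bounded, so the I^0_a
   exhaust I^0; I^0_a embeds into (a' x Q)^omega for an infinite a' >= a, so it
   has size < kappa because a'^omega < kappa; and continuity holds because the
   first coordinates of f vanish from some point on.
   For the interpolation property, the first coordinates of nu on its longest
   prefix staying below the limit d are finitely many nonzero ordinals below d,
   so they have a bound b < d.  If nu < s with s in I^0_d and they first
   differ at n, then nu(0), ..., nu(n) lie in that prefix; keep them, raise the
   rational part of nu(n) strictly between nu(n) and s(n), and put zeros after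
   n: this is an element of I^0_b strictly between nu and s. *)

Lemma sval_inj (A : Type) (P : A -> Prop) : injective (@proj1_sig A P).
Proof. by move=> [a pa] [b pb] /= eab; subst b; congr exist; apply: proof_irrelevance. Qed.

Lemma le_card_trans (A B C : Type) : le_card A B -> le_card B C -> le_card A C.
Proof. by case=> f f_inj [g g_inj]; exists (g \o f); apply: inj_comp. Qed.

Lemma le_lt_card_trans (A B C : Type) : le_card A B -> lt_card B C -> lt_card A C.
Proof.
move=> AB [BC notCB]; split; first exact: le_card_trans AB BC.
by move=> CA; apply: notCB; apply: le_card_trans CA AB.
Qed.

Lemma le_card_countable (T : countType) (A : Type) : le_card nat A -> le_card T A.
Proof.
by case=> f f_inj; exists (f \o pickle); apply: inj_comp f_inj (pcan_inj (@pickleK T)).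
Qed.

Lemma le_card_interleave (X Y A : Type) :
  le_card X A -> le_card Y A -> le_card (nat -> X * Y) (nat -> A).
Proof.
case=> f f_inj [g g_inj].
exists (fun h n => if odd n then g (h n./2).2 else f (h n./2).1) => h h' E.
apply: functional_extensionality => n.
have := f_equal (fun G => G n.*2.+1) E; have := f_equal (fun G => G n.*2) E.
rewrite /= odd_double doubleK uphalf_double => /f_inj E1 /g_inj E2.
by move: E1 E2; case: (h n) (h' n) => [? ?] [? ?] /= -> ->.
Qed.

Lemma ltKQ_interpolate (K : Type) (ltK : K -> K -> Prop) (p r : K * rat) :
  ltKQ ltK p r -> exists q, (p.2 < q)%R /\ ltKQ ltK (p.1, q) r.
Proof.
case=> [lt1 | [eq1 lt2]]; first by exists (p.2 + 1)%R; split; [lra | left].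
by exists ((p.2 + r.2) / 2)%R; split; [lra | right; split => //=; lra].
Qed.

Section WellOrder.
Context {K : Type} {ltK : K -> K -> Prop}.
Hypothesis Hwo : strict_wellorder ltK.

Local Notation leK := (leK ltK).
Local Notation I0 := (I0 ltK).

Lemma ltK_irr x : ~ ltK x x.
Proof. by case: Hwo => _ [irr _]; apply: irr. Qed.

Lemma ltK_trans {x y z} : ltK x y -> ltK y z -> ltK x z.
Proof. by case: Hwo => _ [_ [trans _]]; apply: trans. Qed.

Lemma ltK_total x y : ltK x y \/ x = y \/ ltK y x.
Proof. by case: Hwo => _ [_ [_ total]]; apply: total. Qed.

Lemma leK_ltK_trans {x y z} : leK x y -> ltK y z -> ltK x z.
Proof. by case=> [xy | ->] // yz; apply: ltK_trans xy yz. Qed.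

Lemma ltK_leK_trans {x y z} : ltK x y -> leK y z -> ltK x z.
Proof. by move=> xy [yz | <-] //; apply: ltK_trans xy yz. Qed.

Lemma le_card_seg a b : leK a b -> le_card (seg ltK a) (seg ltK b).
Proof.
move=> ab; exists (fun u => exist _ (sval u) (ltK_leK_trans (proj2_sig u) ab)).
by move=> u v /(f_equal sval) /= /sval_inj.
Qed.

Lemma leK_ub x y : exists2 w, w = x \/ w = y & leK x w /\ leK y w.
Proof.
case: (ltK_total x y) => [xy | [<- | yx]].
- by exists y; [right | split; [left | right]].
- by exists x; [left | split; right].
- by exists x; [left | split; [right | left]].
Qed.

Lemma exists_zero (x : K) : exists z, is_zero ltK z.
Proof.
case: Hwo => wf_ltK _; elim/(well_founded_ind wf_ltK): x => x IH.
case: (classic (exists y, ltK y x)) => [[y /IH] // | no_lt].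
by exists x => y yx; apply: no_lt; exists y.
Qed.

Lemma zero_leK z x : is_zero ltK z -> leK z x.
Proof. by move=> z0; case: (ltK_total z x) => [? | [-> | /z0]]; [left | right |]. Qed.

Lemma limit_no_max {d} : is_limit ltK d ->
  forall w, ltK w d -> exists2 c, ltK c d & ltK w c.
Proof. by case=> _ d_lim w /d_lim [c [wc cd]]; exists c. Qed.

Section NoMaximum.
Context {B : K -> Prop}.
Hypothesis B_inhabited : exists c, B c.
Hypothesis B_no_max : forall w, B w -> exists2 c, B c & ltK w c.

Lemma bound_finite_family (f : nat -> K) N :
  exists2 b, B b & forall m, (m < N)%N -> B (f m) -> ltK (f m) b.
Proof.
elim: N => [|N [b Bb fb]]; first by case: B_inhabited => c Bc; exists c.
have [BfN | notBfN] := classic (B (f N)); last first.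
  exists b => // m; rewrite ltnS leq_eqVlt => /orP[/eqP-> // | /fb //].
have [w Bw [bw fNw]] : exists2 w, B w & leK b w /\ leK (f N) w.
  by have [w [-> | ->] ub] := leK_ub b (f N); [exists b | exists (f N)].
have [c Bc wc] := B_no_max _ Bw.
exists c => // m; rewrite ltnS leq_eqVlt => /orP[/eqP-> _ | /fb fm /fm fmb].
  exact: leK_ltK_trans fNw wc.
by apply: ltK_trans fmb _; apply: leK_ltK_trans bw wc.
Qed.

Lemma bound_I0_prefixes (x : I0) : exists2 b, B b &
  forall n, (forall m, (m <= n)%N -> B (sval x m).1) ->
  forall m, (m <= n)%N -> ltK (sval x m).1 b.
Proof.
case: x => f [N f0] /=.
have [b Bb fb] := bound_finite_family (fun m => (f m).1) N.
have [c Bc bc] := B_no_max _ Bb.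
exists c => // n Bf m mn; have [mN | Nm] := ltnP m N.
  by apply: ltK_trans bc; apply: fb mN (Bf m mn).
by apply: leK_ltK_trans bc; apply: zero_leK; apply: f0.
Qed.

End NoMaximum.

Definition I0_below (a : K) (x : I0) : Prop := forall n, ltK (sval x n).1 a.

Lemma I0_below_mono a b x : leK a b -> I0_below a x -> I0_below b x.
Proof. by move=> ab xa n; apply: ltK_leK_trans (xa n) ab. Qed.

Lemma I0_below_le_card a :
  le_card {x : I0 | I0_below a x} (nat -> seg ltK a * rat).
Proof.
exists (fun u n => (exist _ (sval (sval u) n).1 (@proj2_sig _ (I0_below a) u n),
                    (sval (sval u) n).2)).
move=> u v E; apply: sval_inj; apply: sval_inj; apply: functional_extensionality => n.
case: (f_equal (fun G => G n) E).
by case: (sval (sval u) n) (sval (sval v) n) => [? ?] [? ?] /= -> ->.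
Qed.

Lemma I0_below_limit d x :
  is_limit ltK d -> I0_below d x -> exists a, ltK a d /\ I0_below a x.
Proof.
move=> d_lim xd.
have [b bd xb] := bound_I0_prefixes (proj1 d_lim) (limit_no_max d_lim) x.
by exists b; split => // n; apply: (xb n) => // m _.
Qed.

Lemma I0lt_interpolate z (nu s : I0) n : is_zero ltK z ->
  (forall m, (m < n)%N -> sval nu m = sval s m) -> ltKQ ltK (sval nu n) (sval s n) ->
  exists s' : I0, [/\ I0lt nu s', I0lt s' s &
    forall m, (sval s' m).1 = if (m <= n)%N then (sval nu m).1 else z].
Proof.
move=> z0 nu_s /ltKQ_interpolate [q [nu_q q_s]].
pose g m := if (m < n)%N then sval nu m else if m == n then ((sval nu n).1, q) else (z, 0%R).
have g_fin : fin_supp ltK g.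
  by exists n.+1 => m nm; rewrite /g ltnNge (ltnW nm) (gtn_eqF nm).
exists (exist _ g g_fin); split.
- exists n; split=> [m mn | ]; first by rewrite /= /g mn.
  by rewrite /= /g ltnn eqxx; right.
- exists n; split=> [m mn | ]; first by rewrite /= /g mn nu_s.
  by rewrite /= /g ltnn eqxx.
- by move=> m; rewrite /= /g; case: ltngtP => // ->.
Qed.

Lemma I0_below_interpolate d (nu : I0) : is_limit ltK d ->
  exists b, ltK b d /\ forall s, I0_below d s -> I0lt nu s ->
  exists s', [/\ I0_below b s', I0lt s' s & I0lt nu s'].
Proof.
move=> d_lim.
have [b bd nub] := bound_I0_prefixes (proj1 d_lim) (limit_no_max d_lim) nu.
have [z z0] := exists_zero d.
exists b; split => // s sd [n [nu_s lt_n]].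
have {}nub : forall m, (m <= n)%N -> ltK (sval nu m).1 b.
  apply: nub => m; rewrite leq_eqVlt => /orP[/eqP-> | /nu_s->] //.
  by case: lt_n => [lt1 | [-> _]]; [apply: ltK_trans lt1 (sd n) | apply: sd].
have [s' [nu_s' s'_s s'E]] := I0lt_interpolate z nu s n z0 nu_s lt_n.
exists s'; split => // m; rewrite s'E; case: leqP => [/nub // | _].
by apply: leK_ltK_trans (nub 0%N _) => //; apply: zero_leK.
Qed.

Section Uncountable.
Hypothesis Hunc : uncountable K.
Hypothesis Hreg : regular ltK.

Lemma bounded_nat_seq (f : nat -> K) : exists b, forall n, ltK (f n) b.
Proof.
have [b fb] : exists b, forall y, (exists n, y = f n) -> ltK y b.
  apply: Hreg; split; first by exists sval; apply: sval_inj.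
  have [idx idxE] := ClassicalEpsilon.choice
    (fun (u : {y | exists n, y = f n}) n => sval u = f n) (fun u => proj2_sig u).
  case=> g g_inj; apply: Hunc; exists (idx \o g) => u v /= e.
  by apply: g_inj; apply: sval_inj; rewrite idxE e -idxE.
by exists b => n; apply: fb; exists n.
Qed.

Lemma exists_gtK x : exists y, ltK x y.
Proof. by have [y xy] := bounded_nat_seq (fun=> x); exists y; apply: (xy 0%N). Qed.

Lemma le_card_nat_seg (x : K) : exists w, le_card nat (seg ltK w).
Proof.
have [next nextP] := ClassicalEpsilon.choice _ exists_gtK.
pose s n := iter n next x.
have s_lt m n : (m < n)%N -> ltK (s m) (s n).
  elim: n => // n IH; rewrite ltnS leq_eqVlt => /orP[/eqP-> | /IH smn].
    exact: nextP.
  exact: ltK_trans smn (nextP _).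
have [w sw] := bounded_nat_seq s.
exists w; exists (fun n => exist _ (s n) (sw n)) => m n /(f_equal sval) /= e.
by case: (ltngtP m n) => // [/s_lt | /s_lt]; rewrite e => /ltK_irr.
Qed.

Lemma I0_below_cover x : exists a, I0_below a x.
Proof.
have [|b _ xb] := bound_I0_prefixes (B := fun=> True) (ex_intro _ (sval x 0%N).1 I) _ x.
  by move=> w _; have [c wc] := exists_gtK w; exists c.
by exists b => n; apply: (xb n).
Qed.

Lemma I0_below_small (Homega : pow_omega_below ltK) a :
  lt_card {x : I0 | I0_below a x} K.
Proof.
have [w nat_w] := le_card_nat_seg a.
have [a' _ [aa' wa']] := leK_ub a w.
apply: le_lt_card_trans (Homega a'); apply: le_card_trans (I0_below_le_card a) _.
apply: le_card_interleave; first exact: le_card_seg.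
by apply: le_card_countable; apply: le_card_trans nat_w _; apply: le_card_seg.
Qed.

End Uncountable.
End WellOrder.

Theorem mainTheorem8 (K : Type) (ltK : K -> K -> Prop)
  (Hwo : strict_wellorder ltK)
  (Hcard : is_cardinal ltK)
  (Hunc : uncountable K)
  (Hreg : regular ltK)
  (Hpow : kappa_lt_kappa_eq ltK)
  (Homega : pow_omega_below ltK) :
  exists Rep : K -> I0 ltK -> Prop,
    kappa_representation Rep /\
    forall d : K, is_limit ltK d ->
      forall nu : I0 ltK, exists b : K, ltK b d /\
        forall s : I0 ltK, Rep d s -> I0lt nu s ->
          exists s' : I0 ltK, Rep b s' /\ I0le s' s /\ I0le nu s'.
Proof.
exists (@I0_below _ ltK); split.
  split; first by move=> a b ab x; apply: I0_below_mono.
  split; first by move=> d d_lim x; apply: I0_below_limit.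
  split; first exact: I0_below_small.
  exact: I0_below_cover.
move=> d d_lim nu; have [b [bd nub]] := I0_below_interpolate Hwo d nu d_lim.
exists b; split => // s sd nu_s.
have [s' [s'b s'_s nu_s']] := nub s sd nu_s.
by exists s'; split => //; split; left.
Qed.
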